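(* Let $k\ge1$ and $m\ge0$. The largest positive integer $n\in A_{2k}$ with $\max\mathcal{CG}(n)=F_{2k+2m}$ is $$F_{2k}+F_{2k+2}+\cdots+F_{2k+2m-2}+2F_{2k+2m}$$ (for $m=0$ this is $2F_{2k}$).
   Context: Fibonacci numbers: $F_1=F_2=1$, $F_{n+1}=F_n+F_{n-1}$ for $n\ge2$. Chung–Graham decomposition: every positive integer $n$ has a unique representation $n=\sum_{i\ge1}c_iF_{2i}$ with $c_i\in\{0,1,2\}$, only finitely many nonzero, such that whenever $c_i=c_j=2$ with $i<j$ there is $k$ with $i<k<j$ and $c_k=0$. Let $\mathcal{CG}(n)$ be the set of $F_{2i}$ with $c_i\neq0$. For $k\ge1$, $A_{2k}=\{n\ge1:\min\mathcal{CG}(n)=F_{2k}\}$. *)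

From mathcomp Require Import all_boot.
Set Implicit Arguments. Unset Strict Implicit. Unset Printing Implicit Defensive.

Fixpoint fib (n : nat) : nat :=
  match n with
  | 0 => 0
  | 1 => 1
  | (p.+1 as q).+1 => fib q + fib p
  end.

(* A coefficient list c = [:: c_1; c_2; ...]; cg_coef c i = c_i for i >= 1
   (and 0 beyond the list). *)
Definition cg_coef (c : seq nat) (i : nat) : nat := nth 0 c i.-1.

Definition cg_val (c : seq nat) : nat :=
  \sum_(1 <= i < (size c).+1) cg_coef c i * fib (2 * i).

Definition cg_admissible (c : seq nat) : Prop :=
  all (fun x => x <= 2) c /\
  forall i j, 1 <= i -> i < j -> cg_coef c i = 2 -> cg_coef c j = 2 ->
    exists k, i < k < j /\ cg_coef c k = 0.

Definition CG_rep (c : seq nat) (n : nat) : Prop :=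
  cg_admissible c /\ cg_val c = n.

Definition CG_set (c : seq nat) : seq nat :=
  [seq fib (2 * i) | i <- iota 1 (size c) & cg_coef c i != 0].

Definition is_min_of (a : nat) (s : seq nat) : Prop :=
  a \in s /\ all (fun x => a <= x) s.
Definition is_max_of (b : nat) (s : seq nat) : Prop :=
  b \in s /\ all (fun x => x <= b) s.

(* n >= 1, n in A_{2k} (min CG(n) = F_{2k}) and max CG(n) = F_{2k+2m}. *)
Definition in_A_with_max (k m n : nat) : Prop :=
  0 < n /\ exists c, CG_rep c n /\ is_min_of (fib (2 * k)) (CG_set c)
                                /\ is_max_of (fib (2 * k + 2 * m)) (CG_set c).

From mathcomp Require Import all_boot zify.

(* The maximum is attained by c_i = 1 for k <= i < k + m and c_(k+m) = 2.
   For optimality, follow the partial sums s_j = sum_(i <= j) c_i F_(2i) of an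
   admissible decomposition with c_i = 0 for i < k: by induction on j,
   s_j + F_(2k-1) <= F_(2j+1) if the last c_i in {0, 2} with i <= j is not a 2
   (so that c_(j+1) = 2 is allowed), and s_j + F_(2k-1) <= F_(2j+2) otherwise.
   At j = k + m this gives n + F_(2k-1) <= F_(2k+2m+2), and the claimed
   maximum reaches this bound because
   F_(2k) + ... + F_(2k+2m-2) = F_(2k+2m-1) - F_(2k-1). *)

Set Implicit Arguments.
Unset Strict Implicit.
Unset Printing Implicit Defensive.

Lemma fibSS n : fib n.+2 = fib n.+1 + fib n.
Proof. by []. Qed.

Lemma fib_gt0 n : 0 < n -> 0 < fib n.
Proof. by case: n => // n _; elim: n => // n IH; rewrite fibSS; lia. Qed.

Lemma fib_double_ltn : {homo (fun i => fib (2 * i)) : i j / i < j}.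
Proof.
apply: (homo_ltn ltn_trans) => i.
have -> : 2 * i.+1 = (2 * i).+2 by lia.
by rewrite fibSS -[X in X < _]add0n ltn_add2r fib_gt0.
Qed.

Lemma leq_fib_double : {mono (fun i => fib (2 * i)) : i j / i <= j}.
Proof. exact: leq_mono fib_double_ltn. Qed.

Lemma cg_coef_default c i : size c < i -> cg_coef c i = 0.
Proof. by move=> lt_ci; rewrite /cg_coef nth_default //; lia. Qed.

Lemma CG_setP c x :
  reflect (exists2 i, (0 < i) && (cg_coef c i != 0) & x = fib (2 * i))
          (x \in CG_set c).
Proof.
apply: (iffP mapP) => [[i] | [i /andP[i_gt0 ci_neq0] ->]].
  rewrite mem_filter mem_iota => /andP[ci_neq0 /andP[i_gt0 _]] ->.
  by exists i; rewrite ?i_gt0.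
exists i => //; rewrite mem_filter mem_iota ci_neq0 i_gt0 /=.
by case: ltnP ci_neq0 => // /cg_coef_default ->.
Qed.

Lemma CG_set_support c lo hi :
  is_min_of (fib (2 * lo)) (CG_set c) -> is_max_of (fib (2 * hi)) (CG_set c) ->
  forall i, 0 < i -> cg_coef c i != 0 -> lo <= i <= hi.
Proof.
move=> [_ /allP lo_min] [_ /allP hi_max] i i_gt0 ci_neq0.
have ci_in : fib (2 * i) \in CG_set c by apply/CG_setP; exists i; rewrite ?i_gt0.
by rewrite -(leq_fib_double lo) -(leq_fib_double i hi) lo_min ?hi_max.
Qed.

Lemma CG_set_interval c lo hi : 0 < lo <= hi ->
  (forall i, 0 < i -> (cg_coef c i != 0) = (lo <= i <= hi)) ->
  is_min_of (fib (2 * lo)) (CG_set c) /\ is_max_of (fib (2 * hi)) (CG_set c).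
Proof.
move=> /andP[lo_gt0 lo_hi] supp.
have inCG i : 0 < i -> lo <= i <= hi -> fib (2 * i) \in CG_set c.
  by move=> i_gt0 i_in; apply/CG_setP; exists i; rewrite ?i_gt0 ?supp.
have bounds x : x \in CG_set c -> fib (2 * lo) <= x <= fib (2 * hi).
  by case/CG_setP => i /andP[i_gt0]; rewrite supp // => i_in ->; rewrite !leq_fib_double.
split; split.
- by apply: inCG; rewrite ?leqnn ?lo_hi.
- by apply/allP => x /bounds /andP[].
- by apply: inCG; rewrite ?leqnn ?lo_hi ?(leq_trans lo_gt0).
- by apply/allP => x /bounds /andP[].
Qed.

Definition cg_psum (c : seq nat) (j : nat) : nat :=
  \sum_(1 <= i < j.+1) cg_coef c i * fib (2 * i).

Lemma cg_psumS c j :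
  cg_psum c j.+1 = cg_psum c j + cg_coef c j.+1 * fib (2 * j.+1).
Proof. by rewrite /cg_psum big_nat_recr. Qed.

Lemma cg_psumD c j d : cg_psum c (j + d) =
  cg_psum c j + \sum_(j.+1 <= i < (j + d).+1) cg_coef c i * fib (2 * i).
Proof. by rewrite /cg_psum -big_cat_nat ?ltnS ?leq_addr. Qed.

Lemma cg_psum_zero_tail c j d :
  (forall i, j < i <= j + d -> cg_coef c i = 0) -> cg_psum c (j + d) = cg_psum c j.
Proof.
move=> zero; rewrite cg_psumD big_nat_cond big1 ?addn0 // => i /andP[i_in _].
by rewrite zero ?mul0n.
Qed.

Lemma cg_val_psum c j :
  (forall i, j < i -> cg_coef c i = 0) -> cg_val c = cg_psum c j.
Proof.
move=> zero; rewrite /cg_val -/(cg_psum c (size c)).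
case: (leqP j (size c)) => [/subnKC <- | /ltnW /subnKC <-].
  by apply: cg_psum_zero_tail => i /andP[/zero].
by rewrite cg_psum_zero_tail // => i /andP[/cg_coef_default].
Qed.

Lemma cg_coef_le2 c i : cg_admissible c -> cg_coef c i <= 2.
Proof.
case=> /allP le2 _; rewrite /cg_coef.
by case: (ltnP i.-1 (size c)) => [/(mem_nth 0)/le2 | /(nth_default 0) ->].
Qed.

(* [cg_free c j]: the last c_i in {0, 2} with 1 <= i <= j, if any, is 0, so
   admissibility allows c_(j+1) = 2. *)
Fixpoint cg_free (c : seq nat) (j : nat) : bool :=
  if j is j'.+1 then
    match cg_coef c j with 0 => true | 2 => false | _ => cg_free c j' end
  else true.

Lemma cg_freeS c j : cg_free c j.+1 =
  match cg_coef c j.+1 with 0 => true | 2 => false | _ => cg_free c j end.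
Proof. by []. Qed.

Lemma cg_free_lastPn c j : ~~ cg_free c j ->
  exists2 i, (0 < i <= j) && (cg_coef c i == 2) &
             forall l, i < l <= j -> cg_coef c l != 0.
Proof.
elim: j => // j IH; rewrite cg_freeS.
case: (eqVneq (cg_coef c j.+1) 2) => [two | not_two] not_free.
  by exists j.+1; [rewrite two ltnSn | move=> l; lia].
have nz : cg_coef c j.+1 != 0 by move: not_free; case: (cg_coef c j.+1).
have {not_two}not_free : ~~ cg_free c j.
  by move: not_free nz not_two; case: (cg_coef c j.+1) => [|[|[|q]]].
have [i /andP[/andP[i_gt0 le_ij] two_i] nz_between] := IH not_free.
exists i; first by rewrite i_gt0 two_i leqW.
move=> l /andP[lt_il]; rewrite leq_eqVlt ltnS => /orP[/eqP -> // | le_lj].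
by apply: nz_between; rewrite lt_il.
Qed.

Lemma cg_free_two c j : cg_admissible c -> cg_coef c j.+1 = 2 -> cg_free c j.
Proof.
case=> _ sep two; apply: contraT => /cg_free_lastPn[i /andP[/andP[i_gt0 le_ij]]].
move=> /eqP two_i nz; have [l [/andP[lt_il lt_lj] zero_l]] := sep i j.+1 i_gt0 le_ij two_i two.
by move: (nz l); rewrite zero_l eqxx lt_il -ltnS lt_lj => /(_ isT).
Qed.

Definition cg_bound (c : seq nat) (j : nat) : nat :=
  if cg_free c j then fib (2 * j).+1 else fib (2 * j).+2.

Lemma cg_bound_step c j s : cg_admissible c -> s <= cg_bound c j ->
  s + cg_coef c j.+1 * fib (2 * j.+1) <= cg_bound c j.+1.
Proof.
move=> adm; rewrite /cg_bound cg_freeS.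
have -> : 2 * j.+1 = (2 * j).+2 by lia.
have := @cg_free_two c j adm; have := @cg_coef_le2 c j.+1 adm.
case: (cg_coef c j.+1) => [|[|[|q]]] // _ two_free; rewrite !fibSS.
- by case: cg_free; lia.
- by case: cg_free; lia.
- by rewrite two_free //; lia.
Qed.

Lemma cg_psum_bound c a : cg_admissible c ->
  (forall i, 0 < i <= a -> cg_coef c i = 0) ->
  forall j, a <= j -> cg_psum c j + fib (2 * a).+1 <= cg_bound c j.
Proof.
move=> adm low j /subnKC <-; elim: (j - a) => [|d IH].
  have -> : cg_psum c (a + 0) = 0.
    by rewrite addn0 -[a]add0n cg_psum_zero_tail ?add0n // /cg_psum big_geq.
  rewrite addn0 /cg_bound; case: a low => [|a] low; first by [].
  by rewrite cg_freeS low ?add0n ?leqnn.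
by rewrite addnS cg_psumS addnAC; apply: cg_bound_step.
Qed.

Lemma cg_val_bound c a j : cg_admissible c -> a <= j ->
  (forall i, 0 < i -> cg_coef c i != 0 -> a < i <= j) ->
  cg_val c + fib (2 * a).+1 <= fib (2 * j).+2.
Proof.
move=> adm le_aj supp.
rewrite (cg_val_psum (j := j)); last first.
  by move=> i lt_ji; apply/eqP; apply: contraTT lt_ji => /supp; lia.
have low i : 0 < i <= a -> cg_coef c i = 0.
  by case/andP=> i_gt0 le_ia; apply/eqP; apply: contraTT le_ia => /supp; lia.
apply: leq_trans (cg_psum_bound adm low le_aj) _.
by rewrite /cg_bound fibSS; case: cg_free; lia.
Qed.

Lemma sum_fib_double a m :
  \sum_(a.+1 <= i < a.+1 + m) fib (2 * i) + fib (2 * a).+1 = fib (2 * (a + m)).+1.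
Proof.
elim: m => [|m IH]; first by rewrite !addn0 big_geq.
rewrite addnS big_nat_recr ?leq_addr // addnAC IH.
have -> : 2 * (a.+1 + m) = (2 * (a + m)).+2 by lia.
have -> : 2 * (a + m.+1) = (2 * (a + m)).+2 by lia.
by rewrite (addnC (fib _.+1)).
Qed.

Definition cg_extremal (a m : nat) : seq nat :=
  mkseq (fun p => if p < a then 0 else if p < a + m then 1 else 2) (a + m).+1.

Lemma cg_coef_extremal a m i : 0 < i <= (a + m).+1 ->
  cg_coef (cg_extremal a m) i = if i <= a then 0 else if i <= a + m then 1 else 2.
Proof. by case: i => // i /andP[_ le_i]; rewrite /cg_coef nth_mkseq. Qed.

Lemma cg_extremal_support a m i : 0 < i ->
  (cg_coef (cg_extremal a m) i != 0) = (a < i <= (a + m).+1).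
Proof.
move=> i_gt0; case: (leqP i (a + m).+1) => [le_i | lt_i].
  rewrite cg_coef_extremal ?i_gt0 // andbT.
  by case: (leqP i a) => // _; case: leqP.
by rewrite cg_coef_default ?size_mkseq // andbF.
Qed.

Lemma cg_extremal_admissible a m : cg_admissible (cg_extremal a m).
Proof.
have two i : 0 < i -> cg_coef (cg_extremal a m) i = 2 -> i = (a + m).+1.
  move=> i_gt0; case: (leqP i (a + m).+1) => [le_i | lt_i].
    by rewrite cg_coef_extremal ?i_gt0 //; case: leqP => // _; case: leqP => // ? _; lia.
  by rewrite cg_coef_default ?size_mkseq.
split; first by apply/allP => _ /mapP[p _ ->]; case: ifP => // _; case: ifP.
move=> i j i_gt0 lt_ij /(two _ i_gt0) eq_i /two eq_j.
by have := eq_j (leq_trans i_gt0 (ltnW lt_ij)); lia.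
Qed.

Lemma cg_val_extremal a m : cg_val (cg_extremal a m) =
  \sum_(a.+1 <= i < a.+1 + m) fib (2 * i) + 2 * fib (2 * (a + m).+1).
Proof.
set c := cg_extremal a m.
have coef i : 0 < i <= (a + m).+1 ->
    cg_coef c i = if i <= a then 0 else if i <= a + m then 1 else 2.
  exact: cg_coef_extremal.
have low : cg_psum c a = 0.
  rewrite -[a in cg_psum _ a]add0n cg_psum_zero_tail /cg_psum ?big_geq // => i.
  rewrite add0n => /andP[i_gt0 le_ia]; rewrite coef ?i_gt0 ?le_ia //; lia.
have top : cg_coef c (a + m).+1 = 2.
  by rewrite coef ?leqnn // ltnNge leq_addr ltnn.
rewrite /cg_val size_mkseq -/(cg_psum _ _) cg_psumS cg_psumD low top add0n -addSn.
congr (_ + _); apply: eq_big_nat => i /andP[lt_ai lt_i].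
by rewrite coef; [case: leqP => ?; [lia | case: leqP => ?; lia] | lia].
Qed.

Theorem lemma3p1 (k m : nat) (hk : 1 <= k) :
  let N := \sum_(k <= i < k + m) fib (2 * i) + 2 * fib (2 * k + 2 * m) in
  in_A_with_max k m N /\ (forall n, in_A_with_max k m n -> n <= N).
Proof.
case: k hk => // a _ N.
have double_top : 2 * a.+1 + 2 * m = 2 * (a + m).+1 by lia.
have N_tight : N + fib (2 * a).+1 = fib (2 * (a + m).+1).+2.
  rewrite /N addnAC sum_fib_double double_top.
  have -> : 2 * (a + m).+1 = (2 * (a + m)).+2 by lia.
  by rewrite !fibSS; lia.
split.
  split; first by rewrite /N double_top addn_gt0 muln_gt0 fib_gt0 ?orbT.
  exists (cg_extremal a m); split.
    by split; [exact: cg_extremal_admissible | rewrite cg_val_extremal /N double_top].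
  by rewrite double_top; apply: CG_set_interval; [lia | exact: cg_extremal_support].
move=> n [_ [c [[adm <-] [min_c max_c]]]].
rewrite double_top in max_c.
rewrite -(leq_add2r (fib (2 * a).+1)) N_tight.
exact: cg_val_bound adm (leqW (leq_addr m a)) (CG_set_support min_c max_c).
Qed.
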